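(* Let $f(x)$ be an irreducible nonconstant polynomial in $\mathbb{Z}[x]$. Let $b(x) \in \mathbb{Z}[x]$ be an irreducible polynomial, not associate to $f(x)$ in $\mathbb{Z}[x]$, such that there exists an integer $r_b \geq 2$ with $b(x) \mid f(x^{r_b})$ in $\mathbb{Z}[x]$. Then for every $k \in \mathbb{N}$ and every finite sequence $\sigma = (\sigma_1, \ldots, \sigma_k)$ of natural numbers greater than one with $\prod_{i=1}^k \sigma_i = r_b$, there exists a splitting sequence $F = (f_n(x))_{n \in \mathbb{N}_0}$ of $f(x)$ whose exponent sequence begins with $\sigma_1, \ldots, \sigma_k$ and such that $f_k(x) = b(x)$.
   Context: Let $f(x)$ be an irreducible polynomial in $\mathbb{Z}[x]$ and let $(e_n)_{n \in \mathbb{N}}$ be a sequence of positive integers (the exponent sequence; only finitely many of its terms may be specified, in which case only the corresponding finitely many terms of the sequence below matter). A splitting sequence of $f(x)$ with this exponent sequence is a sequence $F = (f_n(x))_{n \in \mathbb{N}_0}$ of irreducible polynomials in $\mathbb{Z}[x]$ with $f_0(x) = f(x)$ and, for each $k \geq 1$, $f_k(x)$ an (arbitrarily chosen) irreducible divisor in $\mathbb{Z}[x]$ of $f_{k-1}(x^{e_k})$. *)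

From HB Require Import structures.
From mathcomp Require Import all_boot all_order all_algebra.
Set Implicit Arguments. Unset Strict Implicit. Unset Printing Implicit Defensive.
Import GRing.Theory.
Local Open Scope ring_scope.

(* Divisibility in the ring Z[x] (NOT mathcomp's %|, which is divisibility
   after pseudo-division, i.e. in Q[x]). *)
Definition dvdZx (a b : {poly int}) : Prop := exists q : {poly int}, b = q * a.

Definition irreducibleZx (p : {poly int}) : Prop :=
  p != 0 /\ p \isn't a GRing.unit /\
  forall q r : {poly int}, p = q * r -> q \is a GRing.unit \/ r \is a GRing.unit.

Definition associateZx (a b : {poly int}) : Prop :=
  exists u : {poly int}, u \is a GRing.unit /\ a = u * b.

(* F is a splitting sequence of f with exponent sequence e
   (e is indexed from 1; e 0 is unused). *)
Definition splitting_seq (f : {poly int}) (e : nat -> nat) (F : nat -> {poly int}) : Prop :=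
  (forall n, (0 < n)%N -> (0 < e n)%N) /\
  F 0%N = f /\
  forall n, irreducibleZx (F n) /\
    dvdZx (F n.+1) ((F n) \Po 'X^(e n.+1)).

From HB Require Import structures.
From mathcomp Require Import all_boot all_order all_algebra.
From Stdlib Require Import Classical.
Set Implicit Arguments.
Unset Strict Implicit.
Unset Printing Implicit Defensive.
Import GRing.Theory.
Local Open Scope ring_scope.

(* Idea: b is nonconstant, since a constant dividing f(x^r) divides every
   coefficient of f; hence, by Gauss's lemma, b is prime in Z[x]. If a prime b
   divides g(x^m), then b divides p(x^m) for some irreducible factor p of g.
   Writing r = s_1 m, apply this to g = f(x^(s_1)) to get an irreducible
   f_1 | f(x^(s_1)) with b | f_1(x^m), and iterate down the remaining factors
   of r; at the last step b itself divides f_(k-1)(x^(s_k)), so f_k = b. The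
   sequence is continued by f_n = b with exponent 1. *)

Lemma size_poly_unit (R : idomainType) (p : {poly R}) :
  p \is a GRing.unit -> size p = 1%N.
Proof. by rewrite poly_unitE => /andP[/eqP]. Qed.

Lemma polyC_unit (R : idomainType) (c : R) :
  (c%:P \is a GRing.unit) = (c \is a GRing.unit).
Proof.
rewrite poly_unitE size_polyC coefC /=.
by have [->|nz_c] := eqVneq c 0; rewrite ?unitr0 ?andbF.
Qed.

Lemma irredp_dvdpM (R : idomainType) (p q r : {poly R}) :
  irreducible_poly p -> p %| q * r -> (p %| q) || (p %| r).
Proof.
move=> irr_p p_qr; have [cop|ncop] := boolP (coprimep p q).
  by rewrite (Gauss_dvdpr _ cop) in p_qr; rewrite p_qr orbT.
have := irr_p (gcdp p q); rewrite -coprimep_def => /(_ ncop (dvdp_gcdl _ _)).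
by move=> gcd_p; rewrite -(eqp_dvdl _ gcd_p) dvdp_gcdr.
Qed.

Lemma dvdZx_refl (a : {poly int}) : dvdZx a a.
Proof. by exists 1; rewrite mul1r. Qed.

Lemma dvdZx_trans (a b c : {poly int}) : dvdZx a b -> dvdZx b c -> dvdZx a c.
Proof. by move=> [q ->] [q' ->]; exists (q' * q); rewrite mulrA. Qed.

Lemma dvdZx_unit (a u : {poly int}) :
  dvdZx a u -> u \is a GRing.unit -> a \is a GRing.unit.
Proof. by move=> [q ->]; rewrite unitrM => /andP[]. Qed.

Lemma dvdZx_polyC_comp_Xn (c : int) (f : {poly int}) (r : nat) :
  (0 < r)%N -> dvdZx c%:P (f \Po 'X^r) -> dvdZx c%:P f.
Proof.
move=> r_gt0 [q Eq].
have f_dvdz : f \is a polyOver (dvdz c).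
  apply/polyOverP => i.
  have := congr1 (fun p : {poly int} => p`_(i * r)%N) Eq.
  rewrite /= coef_comp_poly_Xn // dvdn_mull // mulnK // coefMC => ->.
  exact: dvdz_mull.
have [f' ->] := polyOver_dvdzP _ _ f_dvdz.
by exists f'; rewrite mulrC mul_polyC.
Qed.

Lemma irreducibleZx_polyC_dvd (f : {poly int}) (c : int) :
  irreducibleZx f -> (1 < size f)%N -> dvdZx c%:P f -> c \is a GRing.unit.
Proof.
move=> [_ [_ irr_f]] size_f [q Ef]; rewrite -polyC_unit.
have [/size_poly_unit size_q|//] := irr_f _ _ Ef.
move: size_f; rewrite Ef mulrC mul_polyC => /leq_trans/(_ (size_scale_leq _ _)).
by rewrite size_q.
Qed.

Lemma irreducibleZx_dvd_comp_Xn_size (f b : {poly int}) (r : nat) :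
  irreducibleZx f -> (1 < size f)%N -> irreducibleZx b -> (0 < r)%N ->
  dvdZx b (f \Po 'X^r) -> (1 < size b)%N.
Proof.
move=> irr_f size_f [_ [b_nunit _]] r_gt0 b_dvd; rewrite ltnNge.
apply/negP => /size1_polyC Eb; move: b_dvd b_nunit; rewrite Eb polyC_unit.
by move=> /(dvdZx_polyC_comp_Xn r_gt0)/(irreducibleZx_polyC_dvd irr_f size_f)->.
Qed.

Lemma irreducibleZx_zcontents_unit (b : {poly int}) :
  irreducibleZx b -> (1 < size b)%N -> zcontents b \is a GRing.unit.
Proof.
move=> [_ [_ irr_b]] size_b.
have := irr_b _ _ (etrans (zpolyEprim b) (esym (mul_polyC _ _))).
rewrite polyC_unit => -[//|/size_poly_unit].
by rewrite size_zprimitive => size1; rewrite size1 in size_b.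
Qed.

Lemma dvdp_dvdZx (b g : {poly int}) :
  zcontents b \is a GRing.unit -> b %| g -> dvdZx b g.
Proof.
move=> cb_unit /dvdpP_int [q ->].
have -> : zprimitive b = (zcontents b)^-1 *: b.
  by rewrite {3}[b]zpolyEprim scalerA mulVr ?scale1r.
by exists ((zcontents b)^-1 *: q); rewrite -!scalerAl mulrC.
Qed.

Lemma irreducibleZx_irredp (b : {poly int}) :
  irreducibleZx b -> (1 < size b)%N -> irreducible_poly b.
Proof.
move=> irr_b size_b; split=> // q size_q q_dvd_b.
have [r Eb] := dvdpP_int q_dvd_b.
have [/size_poly_unit|r_unit] := irr_b.2.2 _ _ Eb.
  by rewrite size_zprimitive => /eqP; rewrite (negPf size_q).
rewrite /eqp q_dvd_b /= (@dvdp_trans _ (zprimitive q)) //.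
  by rewrite -[zprimitive q](mulrK r_unit) -Eb dvdp_mulr.
by rewrite {2}[q]zpolyEprim -mul_polyC dvdp_mull.
Qed.

Definition primeZx (b : {poly int}) : Prop :=
  b \isn't a GRing.unit /\
  forall g h : {poly int}, dvdZx b (g * h) -> dvdZx b g \/ dvdZx b h.

Lemma irreducibleZx_prime (b : {poly int}) :
  irreducibleZx b -> (1 < size b)%N -> primeZx b.
Proof.
move=> irr_b size_b; split=> [|g h [q Eq]]; first by case: irr_b => _ [].
have /irredp_dvdpM/orP : b %| g * h by rewrite Eq dvdp_mull.
move/(_ (irreducibleZx_irredp irr_b size_b)).
have dvdZx_b := dvdp_dvdZx (irreducibleZx_zcontents_unit irr_b size_b).
by case=> /dvdZx_b; [left|right].
Qed.

(* Proper factors of g need not have smaller degree, but then their leading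
   coefficient is a proper divisor of that of g. *)
Definition zweight (g : {poly int}) : nat := size g + `|lead_coef g|.

Lemma zweight_mulr_lt (q r : {poly int}) :
  q != 0 -> r != 0 -> r \isn't a GRing.unit -> (zweight q < zweight (q * r))%N.
Proof.
move=> q_nz r_nz r_nunit.
rewrite /zweight size_mul // lead_coefM abszM -subn1.
have lead_q : (0 < `|lead_coef q|)%N by rewrite absz_gt0 lead_coef_eq0.
have [size_r_le1|size_r_gt1] := leqP (size r) 1; last first.
  rewrite -addnBA ?(ltnW size_r_gt1) // -addnA ltn_add2l -add1n.
  by apply: leq_add; rewrite ?subn_gt0 // leq_pmulr // absz_gt0 lead_coef_eq0.
move: r_nz r_nunit; rewrite (size1_polyC size_r_le1) size_polyC lead_coefC.
rewrite polyC_unit polyC_eq0.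
by case: (r`_0) => [[|[|n]]|[|n]] //= _ _; rewrite addnK ltn_add2l ltn_Pmulr.
Qed.

Lemma prime_dvd_rmorph_irreducible_factor
    (phi : {rmorphism {poly int} -> {poly int}}) (b g : {poly int}) :
  primeZx b -> g != 0 -> dvdZx b (phi g) ->
  exists p, [/\ irreducibleZx p, dvdZx p g & dvdZx b (phi p)].
Proof.
move=> [b_nunit b_prime] g_nz b_dvd.
have [n] := ubnP (zweight g).
elim: n => // n IH in g g_nz b_dvd * => /ltnSE weight_g.
have [g_unit|g_nunit] := boolP (g \is a GRing.unit).
  by move: b_nunit; rewrite (dvdZx_unit b_dvd) ?rmorph_unit.
have [[q [r [Eg q_nunit r_nunit]]]|no_factor] := classic (exists q r,
    [/\ g = q * r, q \isn't a GRing.unit & r \isn't a GRing.unit]); last first.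
  exists g; split=> //; last exact: dvdZx_refl.
  split=> //; split=> // q r Eg.
  have [q_unit|q_nunit] := boolP (q \is a GRing.unit); [by left | right].
  by apply/negPn/negP => r_nunit; apply: no_factor; exists q, r.
have {b_dvd} : dvdZx b (phi q) \/ dvdZx b (phi r).
  by apply: b_prime; rewrite -rmorphM -Eg.
wlog b_dvd_q : q r Eg q_nunit r_nunit / dvdZx b (phi q).
  move=> wlog_q [b_dvd_q|b_dvd_r]; first by apply: (wlog_q q r) => //; left.
  by apply: (wlog_q r q) => //; [rewrite mulrC | left].
move=> _.
have q_nz : q != 0 by apply: contraNneq g_nz => q0; rewrite Eg q0 mul0r.
have r_nz : r != 0 by apply: contraNneq g_nz => r0; rewrite Eg r0 mulr0.
have [|p [irr_p p_dvd_q b_dvd_p]] := IH q q_nz b_dvd_q.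
  by apply: leq_trans weight_g; rewrite Eg zweight_mulr_lt.
exists p; split=> //; apply: dvdZx_trans p_dvd_q _.
by exists r; rewrite Eg mulrC.
Qed.

Lemma splitting_seq_const (b : {poly int}) :
  irreducibleZx b -> splitting_seq b (fun=> 1%N) (fun=> b).
Proof.
move=> irr_b; split=> //; split=> // n; split=> //.
by rewrite /= expr1 comp_polyXr; exact: dvdZx_refl.
Qed.

Lemma splitting_seq_cons (h p : {poly int}) (s : nat) (e e' : nat -> nat)
    (G : nat -> {poly int}) :
  irreducibleZx h -> (0 < s)%N -> dvdZx p (h \Po 'X^s) ->
  e' 1%N = s -> (forall n, e' n.+2 = e n.+1) -> splitting_seq p e G ->
  splitting_seq h e' (fun n => if n is n'.+1 then G n' else h).
Proof.
move=> irr_h s_gt0 p_dvd e'1 e'S [e_gt0 [G0 splitG]].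
split; first by case=> [|[|n]] // _; rewrite ?e'1 ?e'S ?e_gt0.
split=> // -[|n]; first by rewrite G0 e'1.
by rewrite e'S; exact: splitG.
Qed.

(* Past sigma, the exponent is the default 1 of [nth] and F stays at b. *)
Lemma splitting_seq_to_prime_divisor
    (b h : {poly int}) (s : nat) (sigma : seq nat) :
  primeZx b -> irreducibleZx b -> irreducibleZx h ->
  all (fun t => 0 < t)%N (s :: sigma) ->
  dvdZx b (h \Po 'X^(\prod_(t <- s :: sigma) t)) ->
  exists F, splitting_seq h (fun n => nth 1%N (s :: sigma) n.-1) F /\
            F (size sigma).+1 = b.
Proof.
move=> prime_b irr_b; elim: sigma s h => [|s' sigma IH] s h irr_h.
  move=> /andP[s_gt0 _]; rewrite big_seq1 => b_dvd.
  exists (fun n => if n is _.+1 then b else h); split=> //.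
  by apply: (splitting_seq_cons (s := s)) (splitting_seq_const irr_b) => // -[].
move=> /andP[s_gt0 sigma_gt0].
rewrite big_cons mulnC exprM -comp_Xn_poly comp_polyA.
have h_s_nz : h \Po 'X^s != 0.
  by rewrite comp_poly_eq0 ?size_polyXn ?ltnS // irr_h.1.
move=> /(prime_dvd_rmorph_irreducible_factor prime_b h_s_nz).
move=> [p [irr_p p_dvd b_dvd]].
have [G [splitG Gb]] := IH s' p irr_p sigma_gt0 b_dvd.
exists (fun n => if n is n'.+1 then G n' else h); split=> //.
by apply: (splitting_seq_cons (s := s)) splitG.
Qed.

Theorem lemma3p5 (f b : {poly int}) (r : nat) :
  irreducibleZx f -> (1 < size f)%N ->
  irreducibleZx b -> ~ associateZx b f ->
  (2 <= r)%N -> dvdZx b (f \Po 'X^r) ->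
  forall sigma : seq nat,
    all (fun s => 1 < s)%N sigma ->
    (\prod_(s <- sigma) s)%N = r ->
    exists (e : nat -> nat) (F : nat -> {poly int}),
      splitting_seq f e F /\
      (forall i, (1 <= i <= size sigma)%N -> e i = nth 0%N sigma i.-1) /\
      F (size sigma) = b.
Proof.
move=> irr_f size_f irr_b _ r_ge2 b_dvd [|s sigma] sigma_gt1 prod_sigma.
  by move: r_ge2; rewrite -prod_sigma big_nil.
have size_b :=
  irreducibleZx_dvd_comp_Xn_size irr_f size_f irr_b (ltnW r_ge2) b_dvd.
have sigma_gt0 : all (fun t => 0 < t)%N (s :: sigma).
  by apply: sub_all sigma_gt1 => t /ltnW.
rewrite -prod_sigma in b_dvd.
have [F [splitF Fb]] := splitting_seq_to_prime_divisor
  (irreducibleZx_prime irr_b size_b) irr_b irr_f sigma_gt0 b_dvd.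
exists (fun n => nth 1%N (s :: sigma) n.-1), F; split=> //; split=> // i.
by case: i => //= i; rewrite ltnS => i_le; apply: set_nth_default.
Qed.
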